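(* Let $P$ be a planar point set of $n$ points in general position, let $W\in\mathbb{Z}^{n\times3}$ be arbitrary, and let $\mathcal{Q}$ be an arbitrary quadrangle tree for $P$. Then there exists an injective map \[ \Phi: V(P,W)\hookrightarrow \mathrm{OD}(P,\mathcal{Q})\times\mathrm{CA}(W)\times\mathrm{HL}(P). \]
   Context: General position: no duplicates, no three collinear. $\mathrm{CH}(P)$ is the convex hull, $\mathrm{ch}(P)$ the points of $P$ on its boundary, $k=|\mathrm{ch}(P)|$. $\mathbb{I}_P$ is the set of arrays $I_P$ of length $n$ (indices $1,\dots,n$) storing the points of $P$. A hull list of $I_P$ is a sequence $(h_1,\dots,h_k)$ such that $I_P[h_1],\dots,I_P[h_k]$ are the points of $\mathrm{ch}(P)$ in cyclic order with $I_P[h_1]$ the leftmost. $\mathrm{HL}(P)$ is the set of all integer lists of length $k$ that are a hull list of some $I_P\in\mathbb{I}_P$. A witness list of $I_P$ is $W=(a_i,b_i,c_i)_{i=1}^n$ with $a_i=b_i=c_i=-1$ if $I_P[i]\in\mathrm{ch}(P)$ and otherwise $I_P[i]$ in the interior of triangle $(I_P[a_i],I_P[b_i],I_P[c_i])$. $V(P,W)=\{I_P\in\mathbb{I}_P: W\text{ is a witness list of }I_P\}$. A corner assignment of $W$ is a map $C$ on $[n]$ with $C(i)\in\{a_i,b_i,c_i\}$ for all $i$; $\mathrm{CA}(W)$ is their set. A rooted convex polygon $(C,p,q)$ is a convex polygon with a chosen edge $pq$; for distinct vertices $r,s$ of $C$, $C^{rs}$ is the piece of $C$ cut by line $rs$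 not containing $pq$. A quadrangle tree of $(C,p,q)$ is a binary tree whose nodes store quadrangles spanned by (up to) four vertices of $C$: the root stores $p,q,s,r$ where $rs$ is an edge of $C$ (allowing $p=r$ and/or $q=s$); if $p\ne r$ the root has a child whose subtree is a quadrangle tree of $(C^{pr},p,r)$; if $q\ne s$ the root has a child whose subtree is a quadrangle tree of $(C^{qs},q,s)$. Each node's rooted edge is the chosen edge of its rooted polygon. A quadrangle tree for $P$ is a quadrangle tree of $(\mathrm{CH}(P),p,q)$ for an edge $pq$ of $\mathrm{CH}(P)$. The population of a node is the set of points of $P$ on or inside its quadrangle except those on the line of its rooted edge; $r(x)$ denotes the node whose population contains $x$. Partial order: $x\prec_{\mathcal{Q}}y$ if $r(x)$ is a strict ancestor of $r(y)$, or $r(x)=r(y)$ and $y$ lies deeper than $x$ inside the halfplane bounded by the rooted-edge line of $r(x)$ containing its quadrangle. A downdraft is a map $\varphi:P-\mathrm{ch}(P)\to P$ with $x\prec_{\mathcal{Q}}\varphi(x)$ for all $x$; an ordered downdraft is a downdraft plus a total order on each fiber $\varphi^{-1}(\{y\})$; $\mathrm{OD}(P,\mathcal{Q})$ is the set of ordered downdrafts. *)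

From HB Require Import structures.
From mathcomp Require Import all_boot all_order all_algebra.
From mathcomp Require Import finmap.
Set Implicit Arguments. Unset Strict Implicit. Unset Printing Implicit Defensive.
Import Order.TTheory GRing.Theory Num.Theory.
Local Open Scope ring_scope.


Section Geometry.
Variable R : realFieldType.

Definition pt := (R * R)%type.

(* twice the signed area of (a,b,c); > 0 iff a,b,c make a left turn *)
Definition orient (a b c : pt) : R :=
  (b.1 - a.1) * (c.2 - a.2) - (b.2 - a.2) * (c.1 - a.1).

Definition general_position (P : {fset pt}) : Prop :=
  forall a b c, a \in P -> b \in P -> c \in P ->
    a != b -> b != c -> a != c -> orient a b c != 0.

(* x in P lies on the boundary of CH(P): some line through x has all of P
   in one closed halfplane (supporting line of the convex hull). *)
Definition on_hull (P : {fset pt}) (x : pt) : Prop :=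
  exists v : pt, v != (0, 0) /\
    forall y, y \in P -> v.1 * (y.1 - x.1) + v.2 * (y.2 - x.2) <= 0.

Definition in_open_triangle (x a b c : pt) : Prop :=
  (0 < orient a b x /\ 0 < orient b c x /\ 0 < orient c a x) \/
  (orient a b x < 0 /\ orient b c x < 0 /\ orient c a x < 0).

Definition in_quadrangle (x p q s r : pt) : Prop :=
  exists a b c d : R, [/\ 0 <= a, 0 <= b, 0 <= c & 0 <= d] /\
    a + b + c + d = 1 /\
    x.1 = a * p.1 + b * q.1 + c * s.1 + d * r.1 /\
    x.2 = a * p.2 + b * q.2 + c * s.2 + d * r.2.

(* h lists the points of ch(P) in counterclockwise cyclic order *)
Definition hull_ccw (P : {fset pt}) (h : seq pt) : Prop :=
  [/\ uniq h,
      (forall x, x \in h <-> (x \in P /\ on_hull P x)) &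
      forall j, (j < size h)%N -> forall x, x \in P ->
        x != nth (0, 0) h j -> x != nth (0, 0) h (j.+1 %% size h) ->
        0 < orient (nth (0, 0) h j) (nth (0, 0) h (j.+1 %% size h)) x].

Definition leftmost (x : pt) (h : seq pt) : Prop :=
  x \in h /\ forall y, y \in h -> x.1 < y.1 \/ (x.1 = y.1 /\ x.2 <= y.2).

Definition is_array (n : nat) (P : {fset pt}) (I : n.-tuple pt) : Prop :=
  uniq I /\ forall x, x \in I <-> x \in P.

Definition valid_idx (n : nat) (k : int) : bool := (0 < k) && (k <= n%:Z).
Definition at_idx (n : nat) (I : n.-tuple pt) (k : int) : pt :=
  nth (0, 0) I (`|k|%N).-1.

(* W = (a_i, b_i, c_i)_{i=1..n} is a witness list of I; here the paper's index
   i corresponds to the ordinal i : 'I_n with value i - 1 *)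
Definition witness_list (n : nat) (P : {fset pt}) (W : 'I_n -> int * int * int)
    (I : n.-tuple pt) : Prop :=
  forall i : 'I_n, let: (a, b, c) := W i in
    (on_hull P (tnth I i) -> a = -1 /\ b = -1 /\ c = -1) /\
    (~ on_hull P (tnth I i) ->
       [/\ valid_idx n a, valid_idx n b, valid_idx n c &
           in_open_triangle (tnth I i) (at_idx I a) (at_idx I b) (at_idx I c)]).

Definition in_V (n : nat) (P : {fset pt}) (W : 'I_n -> int * int * int)
    (I : n.-tuple pt) : Prop :=
  is_array P I /\ witness_list P W I.

Definition is_corner_assignment (n : nat) (W : 'I_n -> int * int * int)
    (C : {ffun 'I_n -> int}) : Prop :=
  forall i : 'I_n, let: (a, b, c) := W i in C i \in [:: a; b; c].

Definition hull_list (n : nat) (P : {fset pt}) (I : n.-tuple pt) (h : seq int) :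
    Prop :=
  all (valid_idx n) h /\
  let hp := [seq at_idx I k | k <- h] in
  hull_ccw P hp /\ leftmost (head (0, 0) hp) hp.

Definition in_HL (n : nat) (P : {fset pt}) (h : seq int) : Prop :=
  exists I : n.-tuple pt, is_array P I /\ hull_list P I h.

(* a node stores its quadrangle (p, q, s, r), p q being its rooted edge,
   and optional children for (C^{pr}, p, r) and (C^{qs}, q, s) *)
Inductive qtree : Type :=
  QNode : pt -> pt -> pt -> pt -> option qtree -> option qtree -> qtree.

(* A rooted convex polygon (C, p, q) is given by the chain c of its vertices
   c_0 = p, c_1, ..., c_m = q, running from p to q along the boundary of C
   away from the edge pq.  qt_valid t c : t is a quadrangle tree of (C,p,q).
   The root's edge rs is c_i c_{i+1};  C^{pr} is the chain c_0..c_i and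
   C^{qs} is the chain c_m, ..., c_{i+1}. *)
Fixpoint qt_valid (t : qtree) (c : seq pt) : Prop :=
  match t with
  | QNode p q s r l rr =>
      exists i : nat,
        [/\ (i.+1 < size c)%N, p = nth (0, 0) c 0, q = nth (0, 0) c (size c).-1,
            r = nth (0, 0) c i & s = nth (0, 0) c i.+1] /\
        (match l with
         | None => i = 0%N
         | Some t1 => (0 < i)%N /\ qt_valid t1 (take i.+1 c)
         end) /\
        (match rr with
         | None => i.+2 = size c
         | Some t2 => (i.+2 < size c)%N /\ qt_valid t2 (rev (drop i.+1 c))
         end)
  end.

Definition qtree_for (P : {fset pt}) (t : qtree) : Prop :=
  exists h, hull_ccw P h /\
    exists c, (exists i, c = rot i h \/ c = rot i (rev h)) /\
              (2 <= size c)%N /\ qt_valid t c.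

Definition child_of (M N : qtree) : Prop :=
  match N with QNode _ _ _ _ l r => l = Some M \/ r = Some M end.

Inductive strict_desc : qtree -> qtree -> Prop :=
  | SD_child M N : child_of M N -> strict_desc M N
  | SD_trans M K N : child_of M K -> strict_desc K N -> strict_desc M N.

Definition node_of (T N : qtree) : Prop := N = T \/ strict_desc N T.

Definition population (P : {fset pt}) (N : qtree) (x : pt) : Prop :=
  match N with
  | QNode p q s r _ _ => x \in P /\ in_quadrangle x p q s r /\ orient p q x != 0
  end.

Definition rooted_depth (N : qtree) (x : pt) : R :=
  match N with QNode p q _ _ _ _ => `|orient p q x| end.

Definition qprec (P : {fset pt}) (T : qtree) (x y : pt) : Prop :=
  exists N, node_of T N /\ population P N x /\
    ((exists M, strict_desc M N /\ population P M y) \/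
     (population P N y /\ rooted_depth N x < rooted_depth N y)).

(* An ordered downdraft is encoded as (phi, sigma): phi x = Some (phi(x)) for
   x in P - ch(P) and phi x = None for x in ch(P) (outside the domain);
   sigma y lists the fiber phi^{-1}({y}) in its total order. *)
Definition OD_t (P : {fset pt}) :=
  ({ffun P -> option P} * {ffun P -> seq P})%type.

Definition is_ordered_downdraft (P : {fset pt}) (T : qtree) (o : OD_t P) : Prop :=
  let: (phi, sigma) := o in
  (forall x : P, (phi x = None <-> on_hull P (val x)) /\
     forall y : P, phi x = Some y -> qprec P T (val x) (val y)) /\
  (forall y : P, uniq (sigma y) /\
     forall x : P, (x \in sigma y) = (phi x == Some y)).

End Geometry.
Arguments is_ordered_downdraft {R} P T o.

(* Encode an array [I] by a hull list, a corner assignment [C] and the ordered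
   downdraft sending each interior point to its chosen corner, every fibre
   being ordered by array index.  The corner of an interior point [x] is chosen
   strictly deeper in the quadrangle tree: a linear function positive at [x]
   is larger at some vertex of the open witness triangle, so some corner is
   deeper in the node containing [x] or lies in a proper subtree.  Ranking
   nodes by subtree size and then by the number of deeper points, the chosen
   corner has strictly smaller potential than [x].  Decoding: the hull list
   fixes the hull points (a counterclockwise hull list is determined by its
   leftmost vertex), and by induction on the potential every interior point is
   read off the fibre of its already decoded corner, at the position of its
   index among the indices that [C] sends to that corner. *)

From HB Require Import structures.
From mathcomp Require Import all_boot all_order all_algebra.
From mathcomp Require Import finmap.
From mathcomp Require Import ring lra zify.
From Stdlib Require Import Classical ClassicalEpsilon.
Import Order.TTheory GRing.Theory Num.Theory.
Local Open Scope ring_scope.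

Set Implicit Arguments. Unset Strict Implicit. Unset Printing Implicit Defensive.

Lemma nth_rot (T : Type) (x0 : T) (s : seq T) i j : (i <= size s)%N -> (j < size s)%N ->
  nth x0 (rot i s) j = nth x0 s ((j + i) %% size s).
Proof.
move=> le_is lt_js; rewrite /rot nth_cat size_drop.
case: ltnP => bound.
  by rewrite nth_drop addnC modn_small //; lia.
rewrite nth_take; last by lia.
have -> : (j + i = j - (size s - i) + size s)%N by lia.
by rewrite modnDr modn_small //; lia.
Qed.

Lemma ex_min_nat (Q : nat -> Prop) :
  (exists m, Q m) -> exists m, Q m /\ forall m', Q m' -> (m <= m')%N.
Proof.
case=> m; elim/ltn_ind: m => m IH Qm.
have [[m' [Qm' lt_m'm]]|no_less] := classic (exists m', Q m' /\ (m' < m)%N).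
  exact: IH lt_m'm Qm'.
exists m; split=> // m' Qm'; rewrite leqNgt; apply/negP => lt_m'm.
by apply: no_less; exists m'.
Qed.

Lemma sub_count_ltn (T : eqType) (a1 a2 : pred T) (s : seq T) y :
  subpred a1 a2 -> y \in s -> a2 y -> ~~ a1 y -> (count a1 s < count a2 s)%N.
Proof.
move=> sub12; elim: s => // x s IH; rewrite inE => /predU1P [<- a2y a1y|sy a2y a1y] /=.
  by rewrite a2y (negbTE a1y) add0n add1n ltnS sub_count.
rewrite -addnS leq_add ?(IH sy a2y a1y) //.
by case: (a1 x) (sub12 x) => // ->.
Qed.

Section ParentFibres.
Variables (n : nat) (parent : 'I_n -> option 'I_n).

Lemma parent_wf_of_potential (pot : 'I_n -> nat -> Prop) :
  (forall j k, parent j = Some k ->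
     exists2 m1, pot k m1 & forall m0, pot j m0 -> (m1 < m0)%N) ->
  well_founded (fun k j => parent j = Some k).
Proof.
move=> decr; have acc_pot m : forall k, pot k m -> Acc (fun k j => parent j = Some k) k.
  elim/ltn_ind: m => m IH k potk; constructor=> k' /decr [m1 potk' lt_m1].
  exact: IH (lt_m1 _ potk) _ potk'.
move=> j; constructor=> k /[dup] /decr [m1 potk _] _.
exact: acc_pot potk.
Qed.

Lemma eq_from_parent_fibres (U : Type) (f1 f2 : 'I_n -> U) (fibre : U -> seq U) :
  well_founded (fun k j => parent j = Some k) ->
  (forall j, parent j = None -> f1 j = f2 j) ->
  (forall k, fibre (f1 k) = [seq f1 j | j <- enum 'I_n & parent j == Some k]) ->
  (forall k, fibre (f2 k) = [seq f2 j | j <- enum 'I_n & parent j == Some k]) ->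
  f1 =1 f2.
Proof.
move=> wf roots fib1 fib2; elim/(well_founded_ind wf) => j IH.
case Ej: (parent j) => [k|]; last exact: roots.
have /eq_in_map E : [seq f1 i | i <- enum 'I_n & parent i == Some k] =
                    [seq f2 i | i <- enum 'I_n & parent i == Some k].
  by rewrite -fib1 -fib2 IH.
by apply: E; rewrite mem_filter Ej eqxx mem_enum.
Qed.

Variables (T : finType) (elt : 'I_n -> T) (idx : T -> 'I_n).
Hypotheses (eltK : cancel elt idx) (idxK : cancel idx elt).

Definition parent_map : {ffun T -> option T} := [ffun x => omap elt (parent (idx x))].

Definition fibre_map : {ffun T -> seq T} :=
  [ffun y => [seq elt j | j <- enum 'I_n & parent j == Some (idx y)]].

Lemma parent_map_elt j : parent_map (elt j) = omap elt (parent j).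
Proof. by rewrite ffunE eltK. Qed.

Lemma fibre_map_elt k : fibre_map (elt k) = [seq elt j | j <- enum 'I_n & parent j == Some k].
Proof. by rewrite ffunE eltK. Qed.

Lemma fibre_map_uniq y : uniq (fibre_map y).
Proof. by rewrite ffunE (map_inj_uniq (can_inj eltK)) filter_uniq ?enum_uniq. Qed.

Lemma mem_fibre_map x y : (x \in fibre_map y) = (parent_map x == Some y).
Proof.
rewrite -[x]idxK -[y]idxK fibre_map_elt parent_map_elt.
rewrite (mem_map (can_inj eltK)) mem_filter mem_enum andbT.
case: (parent _) => [k|] //=.
by apply/eqP/eqP => [[->]|[/(can_inj eltK) ->]].
Qed.

End ParentFibres.

Section PlaneGeometry.
Variable R : realFieldType.
Implicit Types (e : R) (a b c p q r s x y : pt R).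

Lemma orient_swap a b y : orient b a y = - orient a b y.
Proof. by rewrite /orient; ring. Qed.

Lemma orient_aay a y : orient a a y = 0.
Proof. by rewrite /orient; ring. Qed.

Lemma orient_aba a b : orient a b a = 0.
Proof. by rewrite /orient; ring. Qed.

Lemma orient_abb a b : orient a b b = 0.
Proof. by rewrite /orient; ring. Qed.

Lemma orient_swap_pos e a b y : 0 < e * orient a b y -> 0 < - e * orient b a y.
Proof. by rewrite (orient_swap a b) mulrNN. Qed.

Lemma abs_orient_lt e p q x y :
  0 < e * orient q p x -> e * orient q p x < e * orient q p y ->
  `|orient p q x| < `|orient p q y|.
Proof.
move=> gx gxy; have e0 : 0 < `|e|.
  by rewrite normr_gt0; apply: contraTneq gx => ->; rewrite mul0r ltxx.
rewrite (orient_swap q p x) (orient_swap q p y) !normrN.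
by rewrite -(ltr_pM2l e0) -!normrM !gtr0_norm // (lt_trans gx).
Qed.

Lemma in_quadrangle_weights p q s r y (wp wq ws wr D : R) :
  0 < D -> [/\ 0 <= wp, 0 <= wq, 0 <= ws & 0 <= wr] -> wp + wq + ws + wr = D ->
  y.1 * D = wp * p.1 + wq * q.1 + ws * s.1 + wr * r.1 ->
  y.2 * D = wp * p.2 + wq * q.2 + ws * s.2 + wr * r.2 ->
  in_quadrangle y p q s r.
Proof.
move=> D0 [wp0 wq0 ws0 wr0] sumD E1 E2.
have Dn : D != 0 by rewrite gt_eqF.
exists (wp / D), (wq / D), (ws / D), (wr / D); split.
  by split; apply: divr_ge0 => //; apply: ltW.
split; first by rewrite -!mulrDl sumD divff.
by split; rewrite -[LHS](mulfK Dn) (E1, E2) !mulrDl; congr (_ + _ + _ + _);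
  rewrite mulrAC.
Qed.

(* Split along the diagonal [ps]: in the triangle containing [y], the
   orientations of [y] against its sides are unnormalised barycentric weights. *)
Lemma in_quadrangle_of_orient e p q s r y :
  0 < e * orient q p y -> 0 <= e * orient p r y ->
  0 <= e * orient r s y -> 0 <= e * orient s q y -> in_quadrangle y p q s r.
Proof.
move=> Hqp Hpr Hrs Hsq.
have [Hps|Hps] := lerP 0 (e * orient p s y).
- apply: (@in_quadrangle_weights _ _ _ _ _ (e * orient s q y) (e * orient p s y)
    (e * orient q p y) 0 (e * orient p s q)); rewrite /orient in Hqp Hps Hsq *;
    [nra | split; lra | ring | ring | ring].
- apply: (@in_quadrangle_weights _ _ _ _ _ (e * orient r s y) 0
    (e * orient p r y) (- (e * orient p s y)) (e * orient p r s));
    rewrite /orient in Hps Hpr Hrs *; [nra | split; lra | ring | ring | ring].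
Qed.

Lemma open_triangle_corner_above e p q x a b c :
  0 < e * orient p q x -> in_open_triangle x a b c ->
  exists2 y, y \in [:: a; b; c] & e * orient p q x < e * orient p q y.
Proof.
move=> gx0 Ht.
wlog [la lb lc] : b c Ht / [/\ 0 < orient b c x, 0 < orient c a x & 0 < orient a b x].
  move=> ccw; case: (Ht) => [[Hab [Hbc Hca]]|[Hab [Hbc Hca]]].
    by apply: ccw => //; split.
  have swapped : [/\ 0 < orient c b x, 0 < orient b a x & 0 < orient a c x].
    by rewrite (orient_swap b c) (orient_swap a b) (orient_swap c a) !oppr_gt0.
  have Ht' : in_open_triangle x a c b by case: swapped => *; left.
  have [y Hy gy] := ccw c b Ht' swapped.
  by exists y => //; move: Hy; rewrite !inE => /or3P [] ->; rewrite ?orbT.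
set g := fun z => e * orient p q z.
have [ga|ga] := ltrP (g x) (g a); first by exists a; rewrite ?inE ?eqxx.
have [gb|gb] := ltrP (g x) (g b); first by exists b; rewrite ?inE ?eqxx ?orbT.
have [gc|gc] := ltrP (g x) (g c); first by exists c; rewrite ?inE ?eqxx ?orbT.
(* Otherwise the barycentric identity forces [g] to be constant on the
   triangle, so the line [pq] degenerates and [g x = 0]. *)
exfalso.
have bary : (orient b c x + orient c a x + orient a b x) * g x =
    orient b c x * g a + orient c a x * g b + orient a b x * g c.
  by rewrite /g /orient; ring.
have [Ea Eb Ec] : [/\ g a = g x, g b = g x & g c = g x] by split; nra.
set D := orient b c x + orient c a x + orient a b x.
have u0 : e * (q.1 - p.1) * D = (g c - g a) * (b.1 - a.1) - (g b - g a) * (c.1 - a.1).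
  by rewrite /g /D /orient; ring.
have v0 : e * (q.2 - p.2) * D = (g c - g a) * (b.2 - a.2) - (g b - g a) * (c.2 - a.2).
  by rewrite /g /D /orient; ring.
rewrite Ea Eb Ec subrr !mul0r subrr in u0 v0.
have D0 : D != 0 by rewrite gt_eqF // /D; lra.
move/eqP: u0; rewrite mulf_eq0 (negbTE D0) orbF => /eqP u0.
move/eqP: v0; rewrite mulf_eq0 (negbTE D0) orbF => /eqP v0.
by move: gx0; rewrite /orient mulrBr !mulrA u0 v0; lra.
Qed.

End PlaneGeometry.

Section ConvexChains.
Variables (R : realFieldType) (P : {fset pt R}).
Local Notation z0 := ((0, 0) : pt R).
Implicit Types (e : R) (c : seq (pt R)).

Definition convex_chain e c := forall j, (j.+1 < size c)%N ->
  forall y, y \in P -> y != nth z0 c j -> y != nth z0 c j.+1 ->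
  0 < e * orient (nth z0 c j) (nth z0 c j.+1) y.

Definition convex_cycle e c := forall j, (j < size c)%N ->
  forall y, y \in P -> y != nth z0 c j -> y != nth z0 c (j.+1 %% size c) ->
  0 < e * orient (nth z0 c j) (nth z0 c (j.+1 %% size c)) y.

Lemma convex_cycle_chain e c : convex_cycle e c -> convex_chain e c.
Proof.
move=> cyc j lt_j1 y; have := cyc j (ltnW lt_j1) y.
by rewrite modn_small.
Qed.

Lemma convex_hull_cycle h : hull_ccw P h -> convex_cycle 1 h.
Proof. by case=> _ _ ccw j lt_j y Py *; rewrite mul1r; apply: ccw. Qed.

Lemma convex_cycle_rot e c i : convex_cycle e c -> convex_cycle e (rot i c).
Proof.
move=> cyc; have [le_ic|lt_ci] := leqP i (size c); last by rewrite rot_oversize // ltnW.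
move=> j; rewrite size_rot => lt_jc.
have c_gt0 : (0 < size c)%N by lia.
rewrite nth_rot // nth_rot ?ltn_pmod //.
have -> : ((j.+1 %% size c + i) %% size c = ((j + i) %% size c).+1 %% size c)%N.
  by rewrite modnDml addSn -[in RHS]addn1 modnDml addn1.
by apply: cyc; rewrite ltn_pmod.
Qed.

Lemma convex_cycle_rev e c : convex_cycle e c -> convex_cycle (- e) (rev c).
Proof.
move=> cyc j; rewrite size_rev => lt_jc y Py.
have [lt_j1c|] := ltnP j.+1 (size c).
  rewrite modn_small // !nth_rev // => ne1 ne2.
  have lt_k : (size c - j.+2 < size c)%N by lia.
  have := cyc _ lt_k y Py; rewrite modn_small; last by lia.
  have -> : ((size c - j.+2).+1 = size c - j.+1)%N by lia.
  by move=> /(_ ne2 ne1) /orient_swap_pos.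
move=> le_cj1; have Ej : j = (size c).-1 by lia.
rewrite Ej prednK ?modnn; last by lia.
rewrite !nth_rev; try lia.
have -> : (size c - (size c).-1.+1 = 0)%N by lia.
have -> : (size c - 1 = (size c).-1)%N by lia.
have := cyc _ lt_jc y Py; rewrite Ej prednK ?modnn; last by lia.
by move=> pos ne1 ne2; apply/orient_swap_pos/pos.
Qed.

Lemma convex_chain_take e c k : convex_chain e c -> convex_chain e (take k c).
Proof.
move=> ch; have [lt_kc|] := ltnP k (size c); last by move=> ?; rewrite take_oversize.
move=> j; rewrite size_take lt_kc => lt_j1k y Py.
by rewrite !nth_take; [apply: ch; lia | lia | lia].
Qed.

Lemma convex_chain_rev_drop e c k : convex_chain e c -> convex_chain (- e) (rev (drop k c)).
Proof.
move=> ch j; rewrite size_rev size_drop => lt_j1 y Py.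
rewrite !nth_rev ?size_drop; try lia.
rewrite !nth_drop.
have lt_k : ((k + (size c - k - j.+2)).+1 < size c)%N by lia.
have := ch _ lt_k y Py.
have -> : ((k + (size c - k - j.+2)).+1 = k + (size c - k - j.+1))%N by lia.
by move=> pos ne1 ne2; apply/orient_swap_pos/pos.
Qed.

End ConvexChains.

Section QuadrangleTrees.
Variables (R : realFieldType) (P : {fset pt R}).
Local Notation z0 := ((0, 0) : pt R).
Implicit Types (M N t : qtree R) (e : R) (c : seq (pt R)) (y : pt R).

Fixpoint qsize t : nat :=
  let: QNode _ _ _ _ l r := t in
  ((if l is Some t1 then qsize t1 else 0) + (if r is Some t2 then qsize t2 else 0)).+1.

Lemma qsize_child M N : child_of M N -> (qsize M < qsize N)%N.
Proof. by case: N => p q s r l rr /= [->|->] /=; lia. Qed.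

Lemma qsize_strict_desc M N : strict_desc M N -> (qsize M < qsize N)%N.
Proof. by elim=> [? ? /qsize_child //|? ? ? /qsize_child lt_MK _ lt_KN]; lia. Qed.

Lemma strict_desc_trans M N K : strict_desc M N -> strict_desc N K -> strict_desc M K.
Proof.
elim=> [M' N' cMN dNK|M' K' N' cMK _ IH dNK]; first exact: SD_trans cMN dNK.
exact: SD_trans cMK (IH dNK).
Qed.

Lemma node_of_trans T N M : node_of T N -> node_of N M -> node_of T M.
Proof.
case=> [->|dNT] [->|dMN]; [by left | by right | by right | ].
by right; apply: strict_desc_trans dMN dNT.
Qed.

Definition above_root e t y := let: QNode p q _ _ _ _ := t in 0 < e * orient q p y.

Definition in_region N y :=
  exists c e, [/\ qt_valid N c, convex_chain P e c & above_root e N y].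

Lemma qt_valid_ends p q s r l rr c : qt_valid (QNode p q s r l rr) c ->
  p = nth z0 c 0 /\ q = nth z0 c (size c).-1.
Proof. by case=> i [[]]. Qed.

(* [y] lies beyond the diagonal [pr] (left child), beyond [qs] (right child),
   or in the quadrangle [pqsr]. *)
Lemma in_population_or_child t y : y \in P -> in_region t y ->
  population P t y \/ exists2 M, child_of M t & in_region M y.
Proof.
case: t => p q s r l rr Py [c [e [[i [[lt_i1 Ep Eq Er Es] [Hl Hrr]]] ch /= above]]].
have [above_pr|below_pr] := ltrP 0 (e * orient r p y).
  right; case: l Hl => [t1 [i_gt0 V1]|i0]; last first.
    by move: above_pr; rewrite Er i0 -Ep orient_aay mulr0 ltxx.
  exists t1; first by left.
  exists (take i.+1 c), e; split=> //; first exact: convex_chain_take.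
  case: t1 V1 => p1 q1 s1 r1 l1 rr1 V1 /=.
  have [-> ->] := qt_valid_ends V1.
  by rewrite size_take lt_i1 /= !nth_take // -Er -Ep.
have [above_sq|below_sq] := ltrP 0 (- e * orient s q y).
  right; case: rr Hrr => [t2 [lt_i2 V2]|Ei2]; last first.
    by move: above_sq; rewrite Es Eq -Ei2 orient_aay mulr0 ltxx.
  exists t2; first by right.
  exists (rev (drop i.+1 c)), (- e); split=> //; first exact: convex_chain_rev_drop.
  case: t2 V2 => p2 q2 s2 r2 l2 rr2 V2 /=.
  have [-> ->] := qt_valid_ends V2.
  rewrite size_rev size_drop !nth_rev ?size_drop; try lia.
  rewrite !nth_drop.
  have -> : (i.+1 + (size c - i.+1 - 1) = (size c).-1)%N by lia.
  have -> : (i.+1 + (size c - i.+1 - (size c - i.+1).-1.+1) = i.+1)%N by lia.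
  by rewrite -Eq -Es.
left; split=> //; split; last first.
  by rewrite orient_swap oppr_eq0; apply: contraTneq above => ->; rewrite mulr0 ltxx.
apply: (@in_quadrangle_of_orient _ e) => //.
- by rewrite orient_swap mulrN oppr_ge0.
- have [->|ne_r] := eqVneq y r; first by rewrite orient_aba mulr0.
  have [->|ne_s] := eqVneq y s; first by rewrite orient_abb mulr0.
  by apply: ltW; rewrite Er Es; apply: ch; rewrite -?Er -?Es.
- by rewrite mulNr oppr_le0 in below_sq.
Qed.

Lemma exists_population_node t y : y \in P -> in_region t y ->
  exists N, [/\ node_of t N, population P N y & in_region N y].
Proof.
move=> Py; have [k] := ubnP (qsize t); elim: k t => // k IH t lt_tk reg.
have [pop|[M child regM]] := in_population_or_child Py reg; first by exists t; split=> //; left.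
have [|N [dNM popN regN]] := IH M _ regM; first by have := qsize_child child; lia.
exists N; split=> //; right.
by case: dNM => [->|dNM]; [apply: SD_child | apply: strict_desc_trans dNM (SD_child child)].
Qed.

End QuadrangleTrees.

Section LeftmostPoint.
Variable R : realFieldType.
Implicit Types (x y z : pt R) (h : seq (pt R)).

Definition lex_le x y := x.1 < y.1 \/ (x.1 = y.1 /\ x.2 <= y.2).

Lemma lex_le_total x y : lex_le x y \/ lex_le y x.
Proof.
rewrite /lex_le; have [lt|lt|->] := ltgtP x.1 y.1; [by left; left | by right; left |].
by have [le|/ltW le] := lerP x.2 y.2; [left | right]; right.
Qed.

Lemma lex_le_trans y x z : lex_le x y -> lex_le y z -> lex_le x z.
Proof.
rewrite /lex_le => [[lt1|[E1 le1]] [lt2|[E2 le2]]].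
- by left; apply: lt_trans lt2.
- by left; rewrite -E2.
- by left; rewrite E1.
- by right; split; [rewrite E1 | apply: le_trans le2].
Qed.

Lemma lex_le_anti x y : lex_le x y -> lex_le y x -> x = y.
Proof.
case: x y => [x1 x2] [y1 y2]; rewrite /lex_le /= => [[lt1|[E1 le1]] [lt2|[E2 le2]]].
- by have := lt_trans lt1 lt2; rewrite ltxx.
- by move: lt1; rewrite E2 ltxx.
- by move: lt2; rewrite E1 ltxx.
- by rewrite E1 (@le_anti _ _ x2 y2) ?le1.
Qed.

Lemma exists_leftmost h : h != [::] -> exists x, leftmost x h.
Proof.
elim: h => // a h IH _; have [->|/IH [x [hx minx]]] := eqVneq h [::].
  by exists a; split=> [|y]; rewrite ?inE // => /eqP ->; right.
have [le_ax|le_xa] := lex_le_total a x.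
  exists a; split=> [|y]; rewrite ?inE ?eqxx //.
  by case/predU1P => [->|/minx]; [right | apply: lex_le_trans].
exists x; split=> [|y]; rewrite ?inE ?hx ?orbT //.
by case/predU1P => [->|/minx].
Qed.

Lemma leftmost_unique x y h1 h2 : leftmost x h1 -> leftmost y h2 -> h1 =i h2 -> x = y.
Proof.
move=> [h1x minx] [h2y miny] E.
by apply: lex_le_anti; [apply: minx; rewrite E | apply: miny; rewrite -E].
Qed.

End LeftmostPoint.

Section HullLists.
Variables (R : realFieldType) (P : {fset pt R}).
Local Notation z0 := ((0, 0) : pt R).
Implicit Types h : seq (pt R).

Lemma hull_ccw_rot h i : hull_ccw P h -> hull_ccw P (rot i h).
Proof.
move=> hh; have cyc := convex_cycle_rot (i := i) (convex_hull_cycle hh).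
case: hh => U M _; split=> [|x|j lt_j x Px ne1 ne2]; rewrite ?rot_uniq ?mem_rot //.
by have := cyc j lt_j x Px ne1 ne2; rewrite mul1r.
Qed.

Lemma hull_ccw_mem_eq h1 h2 : hull_ccw P h1 -> hull_ccw P h2 -> h1 =i h2.
Proof. by case=> _ M1 _ [_ M2 _] x; apply/idP/idP => [/M1 /M2 | /M2 /M1]. Qed.

(* A counterclockwise hull list is determined by its first vertex: two lists
   agreeing up to [j] cannot differ at [j+1], since each of the two candidate
   successors would lie strictly left of the edge to the other. *)
Lemma hull_ccw_unique h1 h2 : hull_ccw P h1 -> hull_ccw P h2 ->
  nth z0 h1 0 = nth z0 h2 0 -> h1 = h2.
Proof.
move=> hh1 hh2 E0; have E := hull_ccw_mem_eq hh1 hh2.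
case: hh1 hh2 E => U1 M1 C1 [U2 M2 C2] E.
have Es : size h1 = size h2 by apply/perm_size/uniq_perm.
apply: (eq_from_nth (x0 := z0) Es); elim=> [//|j IH lt_j1].
have {IH}Ej := IH (ltnW lt_j1); have lt_j2 : (j.+1 < size h2)%N by rewrite -Es.
apply/eqP/negPn/negP => ne.
set x := nth z0 h1 j in Ej; set z1 := nth z0 h1 j.+1 in ne; set z2 := nth z0 h2 j.+1 in ne.
have Pz1 : z1 \in P by case/M1: (mem_nth z0 lt_j1).
have Pz2 : z2 \in P by case/M2: (mem_nth z0 lt_j2).
have ne1 : z1 != x by rewrite /z1 /x nth_uniq ?(ltnW lt_j1) // gtn_eqF.
have ne2 : z2 != x by rewrite /z2 Ej nth_uniq ?(ltnW lt_j2) // gtn_eqF.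
have := C1 j (ltnW lt_j1) z2 Pz2; rewrite modn_small // => /(_ ne2); rewrite eq_sym => /(_ ne).
have := C2 j (ltnW lt_j2) z1 Pz1; rewrite modn_small // -Ej => /(_ ne1 ne).
by rewrite orient_swap -/x -/z1 -/z2 /orient; lra.
Qed.

End HullLists.

Section Potentials.
Variables (R : realFieldType) (P : {fset pt R}) (T : qtree R).
Implicit Types (M N : qtree R) (a b c x y z : pt R).

(* The weight [#|P|.+1] lets the subtree size dominate the count of
   deeper points, which is at most [#|P|]. *)
Definition node_rank N z : nat :=
  qsize N * (#|` P|).+1 + count (fun w => rooted_depth N z < rooted_depth N w) (enum_fset P).

(* A relation: we never need that the population containing [z] is unique. *)
Definition potential z m :=
  exists N, [/\ node_of T N, population P N z, in_region P N z & node_rank N z = m].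

Lemma node_rank_deeper N x y :
  y \in P -> rooted_depth N x < rooted_depth N y -> (node_rank N y < node_rank N x)%N.
Proof.
move=> Py deeper; rewrite ltn_add2l; apply: (sub_count_ltn (y := y)) => //.
- by move=> w; apply: lt_trans.
- by rewrite /= ltxx.
Qed.

Lemma node_rank_strict_desc M N x y : strict_desc M N -> (node_rank M y < node_rank N x)%N.
Proof.
move/qsize_strict_desc => lt_MN; rewrite /node_rank.
have le_count := count_size (fun w => rooted_depth M y < rooted_depth M w) (enum_fset P).
apply: leq_trans (leq_addr _ _); apply: leq_trans (_ : (qsize M).+1 * (#|` P|).+1 <= _)%N.
  by rewrite mulSn addnC -addSn leq_add2r ltnS.
by rewrite leq_mul2r lt_MN orbT.
Qed.

Lemma exists_deeper_corner N x a b c :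
  node_of T N -> population P N x -> in_region P N x ->
  {subset [:: a; b; c] <= P} -> in_open_triangle x a b c ->
  exists2 y, y \in [:: a; b; c] &
    qprec P T x y /\ exists2 m, potential y m & (m < node_rank N x)%N.
Proof.
move=> TN popx [cs [e [V ch above_x]]] abcP tri.
case: N TN popx V above_x => p q s r l rr TN popx V /= above_x.
have [y abc_y above_y] := open_triangle_corner_above above_x tri.
have Py := abcP y abc_y.
have deeper : rooted_depth (QNode p q s r l rr) x < rooted_depth (QNode p q s r l rr) y.
  exact: abs_orient_lt above_y.
have regy : in_region P (QNode p q s r l rr) y.
  by exists cs, e; split=> //=; apply: lt_trans above_y.
have [N [dN popN regN]] := exists_population_node Py regy.
exists y => //; split.
  exists (QNode p q s r l rr); split=> //; split=> //.
  case: dN => [EN|dN]; last by left; exists N.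
  by right; rewrite EN in popN.
exists (node_rank N y); first by exists N; split=> //; apply: node_of_trans dN.
by case: dN => [->|/node_rank_strict_desc //]; apply: node_rank_deeper.
Qed.

Hypothesis qtree_for_P : qtree_for P T.

Lemma interior_has_potential x : x \in P -> ~ on_hull P x -> exists m, potential x m.
Proof.
move=> Px interior; case: qtree_for_P => h [hh [c [[i Ec] [size_c V]]]].
have [e cyc] : exists e, convex_cycle P e c.
  case: Ec => ->; [exists 1 | exists (-1)]; apply: convex_cycle_rot => //.
    exact: convex_hull_cycle.
  exact/convex_cycle_rev/convex_hull_cycle.
have on_hull_c z : z \in c -> on_hull P z.
  by case: hh => _ M _; case: Ec => ->; rewrite mem_rot ?mem_rev => /M [].
have ne_x z : z \in c -> x != z.
  by move=> cz; apply/eqP => Ex; apply: interior; rewrite Ex; apply: on_hull_c.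
have regx : in_region P T x.
  exists c, e; split=> //; first exact: convex_cycle_chain.
  case: T V => p q s r l rr V /=; have [Ep Eq] := qt_valid_ends V.
  have c_gt0 : (0 < size c)%N := ltnW size_c.
  have := cyc (size c).-1 _ x Px; rewrite prednK ?modnn // -Ep -Eq.
  by apply=> //; apply: ne_x; rewrite ?Ep ?Eq mem_nth ?ltn_predL.
have [N [TN popN regN]] := exists_population_node Px regx.
by exists (node_rank N x), N.
Qed.

Lemma exists_corner_below_potential x a b c :
  x \in P -> ~ on_hull P x -> {subset [:: a; b; c] <= P} -> in_open_triangle x a b c ->
  exists2 y, y \in [:: a; b; c] &
    qprec P T x y /\ exists2 m1, potential y m1 & forall m0, potential x m0 -> (m1 < m0)%N.
Proof.
move=> Px interior abcP tri.
have [m0 [[N [TN popN regN <-]] min_m0]] := ex_min_nat (interior_has_potential Px interior).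
have [y abc_y [prec [m1 poty lt_m1]]] := exists_deeper_corner TN popN regN abcP tri.
by exists y => //; split=> //; exists m1 => // m' /min_m0; apply: leq_trans.
Qed.

End Potentials.

Section Encoding.
Variables (R : realFieldType) (n : nat) (P : {fset pt R}) (W : 'I_n -> int * int * int).
Variable T : qtree R.
Hypotheses (card_P : #|` P| = n) (qtree_for_P : qtree_for P T).
Local Notation pt := (pt R).
Local Notation z0 := ((0, 0) : pt).
Implicit Types (I : n.-tuple pt) (C : {ffun 'I_n -> int}) (h : seq int).

(* The 1-based index [k] of an array as an ordinal; hull points have the
   corner [-1], which is mapped to [None]. *)
Definition ord_of_idx (k : int) : option 'I_n := if k is Posz m.+1 then insub m else None.

Lemma ord_of_idx_ord (i : 'I_n) : ord_of_idx (i.+1)%:Z = Some i.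
Proof. exact: valK. Qed.

Lemma valid_idx_ord k : valid_idx n k -> exists i : 'I_n, k = (i.+1)%:Z.
Proof.
case: k => [[|m]|m] //; rewrite /valid_idx ltz_nat lez_nat /= => lt_mn.
by exists (Ordinal lt_mn).
Qed.

Lemma at_idx_ord I (i : 'I_n) : at_idx I (i.+1)%:Z = tnth I i.
Proof. by rewrite /at_idx /= (tnth_nth z0). Qed.

Lemma array_tnth I j : is_array P I -> tnth I j \in P.
Proof. by case=> _ memI; apply/memI/mem_tnth. Qed.

Definition corner_spec I j (k : int) :=
  (ord_of_idx k = None <-> on_hull P (tnth I j)) /\
  forall i, ord_of_idx k = Some i ->
    qprec P T (tnth I j) (tnth I i) /\
    exists2 m1, potential P T (tnth I i) m1 &
      forall m0, potential P T (tnth I j) m0 -> (m1 < m0)%N.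

Lemma exists_corner I j : in_V P W I ->
  exists k, (let: (a, b, c) := W j in k \in [:: a; b; c]) /\ corner_spec I j k.
Proof.
case=> arr witness; have := witness j; case: (W j) => [[a b] c] [hullW intW].
have [hullj|intj] := classic (on_hull P (tnth I j)).
  have [-> [-> ->]] := hullW hullj.
  by exists (-1); split; [rewrite inE | split].
have [va vb vc tri] := intW intj.
have abcP : {subset [:: at_idx I a; at_idx I b; at_idx I c] <= P}.
  move=> z; rewrite !inE => /or3P [] /eqP ->; [move: va | move: vb | move: vc];
    by case/valid_idx_ord => i ->; rewrite at_idx_ord array_tnth.
have [y yabc [prec [m1 poty below]]] :=
  exists_corner_below_potential qtree_for_P (array_tnth j arr) intj abcP tri.
have [k [kabc valk Ey]] : exists k, [/\ k \in [:: a; b; c], valid_idx n k & y = at_idx I k].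
  by move: yabc; rewrite !inE => /or3P [] /eqP ->; [exists a | exists b | exists c];
    rewrite ?inE ?eqxx ?orbT.
have [i Ek] := valid_idx_ord valk.
exists k; split=> //; rewrite /corner_spec Ek ord_of_idx_ord; split=> [|_ [<-]]; first by split.
have Eyi : y = tnth I i by rewrite Ey Ek at_idx_ord.
by rewrite -Eyi; split=> //; exists m1.
Qed.

Lemma exists_corner_choice I : in_V P W I ->
  exists C, is_corner_assignment W C /\ forall j, corner_spec I j (C j).
Proof.
move=> VI; have [f corner_f] := fin_all_exists (fun j => exists_corner j VI).
exists [ffun j => f j]; split=> j; last by rewrite ffunE; apply: (corner_f j).2.
by have := (corner_f j).1; case: (W j) => [[a b] c]; rewrite ffunE.
Qed.

Lemma corner_None_on_hull I C j : in_V P W I -> is_corner_assignment W C ->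
  ord_of_idx (C j) = None -> on_hull P (tnth I j).
Proof.
case=> _ witness CA noparent; apply: NNPP => intj.
have := CA j; have := witness j; case: (W j) => [[a b] c] [_ /(_ intj) [va vb vc _]].
rewrite !inE => /or3P [] /eqP Cj; [move: va | move: vb | move: vc]; rewrite -Cj;
  by case/valid_idx_ord => i Ci; rewrite Ci ord_of_idx_ord in noparent.
Qed.

Lemma exists_hull_list I : is_array P I -> exists h, hull_list P I h.
Proof.
case=> _ memI; case: qtree_for_P => h0 [hh0 [c [[i Ec] [size_c _]]]].
have : h0 != [::] by move: size_c; case: Ec => ->; rewrite size_rot ?size_rev; case: (h0).
case/exists_leftmost => x0 [h0x0 min_x0].
set hp := rot (index x0 h0) h0.
have hhp : hull_ccw P hp := hull_ccw_rot _ hh0.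
have hpI x : x \in hp -> x \in I by case: hhp => _ M _ /M [/memI].
exists [seq (index x I).+1%:Z | x <- hp].
have Ehp : [seq at_idx I k | k <- [seq (index x I).+1%:Z | x <- hp]] = hp.
  by rewrite -map_comp map_id_in // => x /hpI xI; rewrite /= /at_idx /= nth_index.
split.
  apply/allP => _ /mapP [x /hpI xI ->].
  by rewrite /valid_idx ltz_nat lez_nat /=; move: xI; rewrite -index_mem size_tuple.
rewrite /= Ehp; split=> //; rewrite /hp rot_index //=; split=> [|y]; first by rewrite inE eqxx.
by rewrite -rot_index // mem_rot; apply: min_x0.
Qed.

Lemma hull_list_points_eq I1 I2 h : hull_list P I1 h -> hull_list P I2 h ->
  [seq at_idx I1 k | k <- h] = [seq at_idx I2 k | k <- h].
Proof.
move=> [_ /= [hh1 lm1]] [_ /= [hh2 lm2]].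
exact: (hull_ccw_unique hh1 hh2 (leftmost_unique lm1 lm2 (hull_ccw_mem_eq hh1 hh2))).
Qed.

Lemma hull_points_eq I1 I2 h j : is_array P I1 -> hull_list P I1 h -> hull_list P I2 h ->
  on_hull P (tnth I1 j) -> tnth I1 j = tnth I2 j.
Proof.
move=> arr1 hl1 hl2 hullj; have /eq_in_map E := hull_list_points_eq hl1 hl2.
case: (hl1) => valid1 [[_ Mh1 _] _].
have /mapP [k hk Ek] : tnth I1 j \in [seq at_idx I1 k | k <- h].
  by apply/Mh1; split=> //; apply: array_tnth.
have [i Ei] := valid_idx_ord (allP valid1 k hk).
have /tuple_uniqP inj1 := arr1.1.
have -> : j = i by apply: inj1; rewrite Ek Ei at_idx_ord.
by rewrite -!at_idx_ord -Ei; apply: E.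
Qed.

Definition fibre_pts (sigma : {ffun P -> seq P}) (y : pt) : seq pt :=
  if insub y is Some u then map val (sigma u) else [::].

Definition encodes I (t : OD_t P * {ffun 'I_n -> int} * seq int) :=
  let: (o, C, h) := t in
  [/\ is_ordered_downdraft P T o, is_corner_assignment W C, hull_list P I h,
      forall j k, ord_of_idx (C j) = Some k ->
        exists2 m1, potential P T (tnth I k) m1 &
          forall m0, potential P T (tnth I j) m0 -> (m1 < m0)%N
    & forall k, fibre_pts o.2 (tnth I k) =
        [seq tnth I j | j <- enum 'I_n & ord_of_idx (C j) == Some k]].

Lemma exists_encoding I : in_V P W I -> exists t, encodes I t.
Proof.
move=> VI; have arr := VI.1.
have [C [CA corner]] := exists_corner_choice VI.
have [h hl] := exists_hull_list arr.
pose elt j : P := FSetSub (array_tnth j arr).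
have elt_inj : injective elt.
  by have /tuple_uniqP inj := arr.1; move=> j1 j2 /(congr1 val) /inj.
have [idx eltK idxK] : bijective elt.
  by apply: (inj_card_bij elt_inj); rewrite card_ord -card_P cardfE.
pose parent j := ord_of_idx (C j).
exists ((parent_map parent elt idx, fibre_map parent elt idx), C, h); split=> //.
- split=> [x | y]; last first.
    by split=> [|x]; rewrite ?(fibre_map_uniq _ eltK) ?(mem_fibre_map _ eltK idxK).
  rewrite -[x]idxK (parent_map_elt _ eltK) /=; have [root_iff below] := corner (idx x).
  split; first by rewrite -root_iff /parent; case: (ord_of_idx _).
  by move=> y; rewrite /parent; case E: (ord_of_idx _) => [k|] //= [<-]; case: (below k E).
- by move=> j k /(corner j).2 [].
- move=> k; rewrite /fibre_pts (_ : tnth I k = val (elt k)) // valK (fibre_map_elt _ eltK).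
  by rewrite -map_comp.
Qed.

Lemma encodes_inj I1 I2 t : in_V P W I1 -> in_V P W I2 ->
  encodes I1 t -> encodes I2 t -> I1 = I2.
Proof.
case: t => [[[phi sigma] C] h] VI1 VI2 [_ CA hl1 pot1 fib1] [_ _ hl2 _ fib2].
apply: eq_from_tnth; apply: (eq_from_parent_fibres (parent := fun j => ord_of_idx (C j))
  (fibre := fibre_pts sigma) _ _ fib1 fib2).
- exact: (parent_wf_of_potential (pot := fun j => potential P T (tnth I1 j)) pot1).
- by move=> j /(corner_None_on_hull VI1 CA); apply: hull_points_eq VI1.1 hl1 hl2.
Qed.

End Encoding.

Unset Implicit Arguments. Set Strict Implicit.

Theorem lemma5p3 (R : realFieldType) (n : nat) (P : {fset pt R})
    (W : 'I_n -> int * int * int) (T : qtree R) :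
  (#|` P|)%fset = n -> general_position P -> qtree_for P T ->
  exists Phi : n.-tuple (pt R) -> (OD_t P * {ffun 'I_n -> int} * seq int)%type,
    (forall I, in_V P W I ->
       let: (o, C, h) := Phi I in
       [/\ is_ordered_downdraft P T o, is_corner_assignment W C & in_HL n P h]) /\
    (forall I1 I2, in_V P W I1 -> in_V P W I2 -> Phi I1 = Phi I2 -> I1 = I2).
Proof.
move=> card_P _ qtree_for_P.
have dflt : inhabited (OD_t P * {ffun 'I_n -> int} * seq int).
  by constructor; exact: (([ffun=> None], [ffun=> [::]]), [ffun=> 0], [::]).
pose Phi I := epsilon dflt (encodes W T I).
have PhiP I : in_V P W I -> encodes W T I (Phi I).
  by move=> VI; apply: epsilon_spec; apply: exists_encoding.
exists Phi; split=> [I VI | I1 I2 VI1 VI2 EPhi].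
  case: (Phi I) (PhiP I VI) => [[o C] h] [DD CA hl _ _]; split=> //.
  by exists I; split=> //; apply: VI.1.
apply: (encodes_inj VI1 VI2 (PhiP _ VI1)).
by rewrite EPhi; apply: PhiP.
Qed.
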